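(* Let $d\in\mathbb{N}$ and $\beta_1,\ldots,\beta_d\in\mathbb{R}$. The multi-indexed sequence $$\bar F_{n_1,\ldots,n_d}=\prod_{k=1}^d\beta_k^{n_{(d-k+1)}-n_{(d-k)}},\qquad n_1,\ldots,n_d\in\mathbb{N}_0,$$ is a $d$-dimensional discrete survival function (i.e. there is an $\mathbb{N}^d$-valued random vector $(\tau_1,\ldots,\tau_d)$ with $\bar F_{n_1,\ldots,n_d}=\mathbb{P}(\tau_1>n_1,\ldots,\tau_d>n_d)$ for all $n_i\in\mathbb{N}_0$) if and only if $(1,\beta_1,\ldots,\beta_d)\in\mathcal{M}_{d+1}$. In that case it is the survival function of an exchangeable $d$-variate wide-sense geometric law.
   Context: $\mathbb{N}=\{1,2,\ldots\}$, $\mathbb{N}_0=\{0\}\cup\mathbb{N}$; $n_{(0)}:=0\le n_{(1)}\le\cdots\le n_{(d)}$ is the ordered list of $n_1,\ldots,n_d$; $0^0:=1$. $\nabla^jx_k:=\sum_{i=0}^j(-1)^i\binom{j}{i}x_{k+i}$. $\mathcal{M}_{d+1}$ is the set of $(x_0,\ldots,x_d)\in\mathbb{R}^{d+1}$ with $x_0=1$, $x_1<1$, and $\nabla^jx_k\ge0$ for $k=0,\ldots,d$, $j=0,\ldots,d-k$. Wide-sense geometric law: for $\tilde p_I\in[0,1]$, $I\subseteq\{1,\ldots,d\}$, $\sum_I\tilde p_I=1$, $\sum_{I\not\ni k}\tilde p_I<1$ for all $k$, run i.i.d. trials with outcome $I$ of probability $\tilde p_I$, let $\tilde E_I$ be the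 first trial with outcome $I$, and $\tau_k=\min\{\tilde E_I:k\in I\}$. *)

From Stdlib Require Import Reals Lra Lia Arith List.
From Stdlib Require Import Sorting.Mergesort.
Import ListNotations.
Open Scope R_scope.

(* Conventions: dimension d; multi-indices n : nat -> nat with coordinates
   n 1, ..., n d (values at other indices are ignored); likewise beta 1..beta d. *)

Fixpoint sumR (N : nat) (f : nat -> R) : R :=
  match N with O => 0 | S N' => sumR N' f + f N' end.

Fixpoint prodR (N : nat) (f : nat -> R) : R :=
  match N with O => 1 | S N' => prodR N' f * f N' end.

Definition sorted_coords (d : nat) (n : nat -> nat) : list nat :=
  NatSort.sort (map n (seq 1 d)).

Definition ord_stat (d : nat) (n : nat -> nat) (j : nat) : nat :=
  match j with O => O | S j' => nth j' (sorted_coords d n) O end.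

(* Fbar_{n_1..n_d} = prod_{k=1}^d beta_k ^ (n_(d-k+1) - n_(d-k))   (0^0 = 1) *)
Definition Fbar (d : nat) (beta : nat -> R) (n : nat -> nat) : R :=
  prodR d (fun i => let k := S i in
     beta k ^ (ord_stat d n (d - k + 1) - ord_stat d n (d - k))%nat).

Definition nabla (j : nat) (x : nat -> R) (k : nat) : R :=
  sum_f_R0 (fun i => (-1) ^ i * C j i * x (k + i)%nat) j.

Definition InM (d : nat) (x : nat -> R) : Prop :=
  x 0%nat = 1 /\ x 1%nat < 1 /\
  forall k j, (k <= d)%nat -> (j <= d - k)%nat -> 0 <= nabla j x k.

Definition upd (v : nat -> nat) (k t : nat) : nat -> nat :=
  fun i => if Nat.eqb i k then t else v i.

(* boxsum d lo M g = sum of g v over all v with lo_i < v_i <= M for i = 1..d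
   (and v_i = 0 for the irrelevant indices i outside 1..d). *)
Fixpoint boxsum (k : nat) (lo : nat -> nat) (M : nat)
  (g : (nat -> nat) -> R) : R :=
  match k with
  | O => g (fun _ => O)
  | S k' => sumR M (fun t => if Nat.leb (lo k) t
                             then boxsum k' lo M (fun v => g (upd v k (S t)))
                             else 0)
  end.

(* S is a d-dimensional discrete survival function: there is a probability
   mass function p on N^d = {1,2,...}^d (the law of an N^d-valued random
   vector tau) with S n = P(tau_1 > n_1, ..., tau_d > n_d) for all n in N_0^d.
   Countable sums over N^d are taken as limits of sums over boxes
   (all terms are nonnegative). *)
Definition IsDiscreteSurvival (d : nat) (S : (nat -> nat) -> R) : Prop :=
  exists p : (nat -> nat) -> R,
    (forall v, 0 <= p v) /\
    Un_cv (fun M => boxsum d (fun _ => O) M p) 1 /\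
    forall n : nat -> nat, Un_cv (fun M => boxsum d n M p) (S n).

(* Subsets I of {1..d} are encoded by masks m < 2^d:  k \in I  iff
   Nat.testbit m (k-1). *)
Definition inI (m k : nat) : bool := Nat.testbit m (k - 1).

Definition sumSubsets (d : nat) (P : nat -> bool) (f : nat -> R) : R :=
  sumR (2 ^ d) (fun m => if P m then f m else 0).

Definition all_coords (d : nat) (q : nat -> bool) : bool :=
  forallb q (seq 1 d).

Definition WSGParams (d : nat) (pt : nat -> R) : Prop :=
  (forall m, (m < 2 ^ d)%nat -> 0 <= pt m <= 1) /\
  sumSubsets d (fun _ => true) pt = 1 /\
  forall k, (1 <= k <= d)%nat ->
    sumSubsets d (fun m => negb (inI m k)) pt < 1.

Definition maxcoord (d : nat) (n : nat -> nat) : nat :=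
  fold_right Nat.max O (map n (seq 1 d)).

(* Survival function P(tau_1 > n_1, ..., tau_d > n_d) of the wide-sense
   geometric law: tau_k > n_k for all k iff for every trial t = 1,2,...
   the outcome I of trial t avoids {k : n_k >= t}; trials are i.i.d., so this
   is the product over t = 1..max_k n_k of the probability of that event. *)
Definition WSG_surv (d : nat) (pt : nat -> R) (n : nat -> nat) : R :=
  prodR (maxcoord d n) (fun t0 =>
    sumSubsets d
      (fun m => all_coords d (fun k => implb (Nat.leb (S t0) (n k))
                                              (negb (inI m k))))
      pt).

Definition IsPerm (d : nat) (sigma : nat -> nat) : Prop :=
  (forall i, (1 <= i <= d)%nat -> (1 <= sigma i <= d)%nat) /\
  (forall i j, (1 <= i <= d)%nat -> (1 <= j <= d)%nat ->
     sigma i = sigma j -> i = j).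

(* the law with survival function S is exchangeable: the joint law of
   (tau_{sigma 1}, ..., tau_{sigma d}) equals that of (tau_1,...,tau_d) for
   every permutation sigma (laws on N^d are determined by survival functions) *)
Definition Exchangeable (d : nat) (S : (nat -> nat) -> R) : Prop :=
  forall sigma, IsPerm d sigma ->
    forall n : nat -> nat,
      S (fun i => n (sigma i)) = S n.

(* Put [x_0 = 1] and [x_k = beta_k].  Sorting the coordinates shows that
   [Fbar_n = prod_(t < max n) x_(#{k : n_k > t})].  For the wide-sense geometric law
   with [p_I = nabla^|I| x_(d-|I|)], binomial inversion shows that a single trial
   avoids a fixed set of [a] coordinates with probability [x_a]; hence its survival
   function is [Fbar], it is exchangeable, and its parameters are admissible as soon
   as [x] lies in [M_(d+1)].  Its point masses are the [d]-fold backward differences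
   of [Fbar], and their box sums converge to [Fbar] because [Fbar] decays like
   [x_1^M] when one coordinate equals [M]; so [Fbar] is a survival function.
   Conversely, for any law with survival function [Fbar], inclusion-exclusion shows
   that [nabla^j x_k = P(tau_1 = ... = tau_j = 1 < tau_(j+1), ..., tau_(j+k))], so
   these differences are nonnegative, and [x_1 = 1] is impossible since it would
   force [tau_1 = infinity] almost surely. *)

From Stdlib Require Import Reals Lra Lia Arith Bool List Permutation Sorted.
From Stdlib Require Import Sorting.Mergesort FunctionalExtensionality.
Import ListNotations.
Open Scope R_scope.

(** * Finite sums, products and binomial coefficients *)

Lemma sumR_ext N f g : (forall i, (i < N)%nat -> f i = g i) -> sumR N f = sumR N g.
Proof.
  induction N as [|N IH]; intros H; simpl; auto.
  rewrite IH by (intros; apply H; lia). rewrite H by lia. reflexivity.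
Qed.

Lemma prodR_ext N f g : (forall i, (i < N)%nat -> f i = g i) -> prodR N f = prodR N g.
Proof.
  induction N as [|N IH]; intros H; simpl; auto.
  rewrite IH by (intros; apply H; lia). rewrite H by lia. reflexivity.
Qed.

Lemma sumR_plus N f g : sumR N (fun i => f i + g i) = sumR N f + sumR N g.
Proof. induction N; simpl; lra. Qed.

Lemma sumR_minus N f g : sumR N (fun i => f i - g i) = sumR N f - sumR N g.
Proof. induction N; simpl; lra. Qed.

Lemma sumR_opp N f : sumR N (fun i => - f i) = - sumR N f.
Proof. induction N; simpl; lra. Qed.

Lemma sumR_zero N : sumR N (fun _ => 0) = 0.
Proof. induction N; simpl; lra. Qed.

Lemma sumR_shift N f : sumR (S N) f = f O + sumR N (fun i => f (S i)).
Proof. induction N as [|N IH]; simpl in *; [|rewrite IH]; lra. Qed.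

Lemma prodR_shift N f : prodR (S N) f = f O * prodR N (fun i => f (S i)).
Proof. induction N as [|N IH]; simpl in *; [|rewrite IH]; lra. Qed.

Lemma sumR_add N K f : sumR (N + K) f = sumR N f + sumR K (fun i => f (N + i)%nat).
Proof.
  induction K as [|K IH]; simpl; rewrite ?Nat.add_0_r, ?Nat.add_succ_r; simpl; lra.
Qed.

Lemma prodR_split N a f :
  (a <= N)%nat -> prodR N f = prodR a f * prodR (N - a) (fun i => f (a + i)%nat).
Proof.
  intros Ha. replace N with (a + (N - a))%nat at 1 by lia.
  generalize (N - a)%nat as K. induction K as [|K IH]; simpl.
  - rewrite Nat.add_0_r; lra.
  - rewrite Nat.add_succ_r; simpl; rewrite IH; lra.
Qed.

Lemma prodR_const N c : prodR N (fun _ => c) = c ^ N.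
Proof. induction N as [|N IH]; simpl; [|rewrite IH]; ring. Qed.

Lemma sumR_nonneg N f : (forall i, (i < N)%nat -> 0 <= f i) -> 0 <= sumR N f.
Proof.
  induction N as [|N IH]; intros H; simpl; [lra|].
  assert (0 <= sumR N f) by (apply IH; intros; apply H; lia).
  specialize (H N ltac:(lia)); lra.
Qed.

Lemma sumR_le N f g : (forall i, (i < N)%nat -> f i <= g i) -> sumR N f <= sumR N g.
Proof.
  induction N as [|N IH]; intros H; simpl; [lra|].
  assert (sumR N f <= sumR N g) by (apply IH; intros; apply H; lia).
  specialize (H N ltac:(lia)); lra.
Qed.

Lemma sumR_term_le N f j :
  (forall i, (i < N)%nat -> 0 <= f i) -> (j < N)%nat -> f j <= sumR N f.
Proof.
  induction N as [|N IH]; intros H Hj; simpl; [lia|].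
  assert (0 <= sumR N f) by (apply sumR_nonneg; intros; apply H; lia).
  destruct (Nat.eq_dec j N) as [->|Hne]; [lra|].
  assert (f j <= sumR N f) by (apply IH; [intros; apply H|]; lia).
  specialize (H N ltac:(lia)); lra.
Qed.

Lemma prodR_nonneg N f : (forall i, (i < N)%nat -> 0 <= f i) -> 0 <= prodR N f.
Proof.
  induction N as [|N IH]; intros H; simpl; [lra|].
  apply Rmult_le_pos; [apply IH; intros|]; apply H; lia.
Qed.

Lemma prodR_le_pow N f r : (forall t, (t < N)%nat -> 0 <= f t <= r) -> prodR N f <= r ^ N.
Proof.
  induction N as [|N IH]; intros H; simpl; [lra|].
  assert (0 <= prodR N f) by (apply prodR_nonneg; intros; apply H; lia).
  specialize (IH ltac:(intros; apply H; lia)). destruct (H N ltac:(lia)). nra.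
Qed.

Lemma prodR_sub_one_factor T s f g h : (s < T)%nat ->
  (forall t, (t < T)%nat -> t <> s -> f t = h t /\ g t = h t) -> f s - g s = h s ->
  prodR T f - prodR T g = prodR T h.
Proof.
  induction T as [|T IH]; intros Hs Ht Hfs; [lia|]. simpl.
  destruct (Nat.eq_dec s T) as [->|Hne].
  - rewrite (prodR_ext T f h), (prodR_ext T g h) by (intros; apply Ht; lia).
    rewrite <- Hfs; ring.
  - destruct (Ht T ltac:(lia) (not_eq_sym Hne)) as [-> ->].
    rewrite <- Rmult_minus_distr_r, IH; auto; lia.
Qed.

(* Unlike Stdlib's [C], [binomR n k = 0] for [k > n]. *)
Fixpoint binomR (n k : nat) : R :=
  match n, k with
  | O, O => 1
  | O, S _ => 0
  | S _, O => 1
  | S n', S k' => binomR n' k' + binomR n' (S k')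
  end.

Lemma binomR_gt n k : (n < k)%nat -> binomR n k = 0.
Proof.
  revert k; induction n as [|n IH]; intros [|k] H; simpl; try lia; auto.
  rewrite !IH by lia; lra.
Qed.

Lemma binomR_n0 n : binomR n 0 = 1.
Proof. destruct n; reflexivity. Qed.

Lemma binomR_nn n : binomR n n = 1.
Proof. induction n as [|n IH]; simpl; auto. rewrite IH, binomR_gt by lia; lra. Qed.

Lemma binomR_C n k : (k <= n)%nat -> binomR n k = C n k.
Proof.
  assert (C0 : forall n, C n 0 = 1).
  { intros m. unfold C. rewrite Nat.sub_0_r. simpl. field. apply INR_fact_neq_0. }
  revert k; induction n as [|n IH]; intros [|k] H; try lia.
  - rewrite C0; reflexivity.
  - rewrite binomR_n0, C0; reflexivity.
  - cbn [binomR]. destruct (Nat.eq_dec k n) as [->|Hne].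
    + rewrite binomR_nn, binomR_gt by lia.
      rewrite (pascal_step1 (S n) (S n)), Nat.sub_diag, C0 by lia. lra.
    + rewrite !IH by lia. apply pascal. lia.
Qed.

Definition binom_sum (r : nat) (f : nat -> R) : R := sumR (S r) (fun i => binomR r i * f i).

Lemma binom_sum_S r f : binom_sum (S r) f = binom_sum r f + binom_sum r (fun i => f (S i)).
Proof.
  unfold binom_sum. rewrite sumR_shift, binomR_n0. cbn [binomR].
  rewrite (sumR_ext (S r) _ (fun i => binomR r i * f (S i) + binomR r (S i) * f (S i)))
    by (intros; lra).
  rewrite sumR_plus, (sumR_shift r (fun i => binomR r i * f i)), binomR_n0.
  simpl sumR at 2. rewrite (binomR_gt r (S r)) by lia. lra.
Qed.

Lemma binom_sum_ext r f g :
  (forall i, (i <= r)%nat -> f i = g i) -> binom_sum r f = binom_sum r g.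
Proof. intros H. apply sumR_ext. intros i Hi. rewrite H by lia; reflexivity. Qed.

Lemma binom_sum_minus r f g : binom_sum r (fun i => f i - g i) = binom_sum r f - binom_sum r g.
Proof. unfold binom_sum. rewrite <- sumR_minus. apply sumR_ext; intros; lra. Qed.

Lemma sum_f_R0_sumR f n : sum_f_R0 f n = sumR (S n) f.
Proof. induction n as [|n IH]; simpl in *; [|rewrite IH]; lra. Qed.

Lemma nabla_sumR j x k :
  nabla j x k = sumR (S j) (fun i => (-1) ^ i * binomR j i * x (k + i)%nat).
Proof.
  unfold nabla. rewrite sum_f_R0_sumR. apply sumR_ext.
  intros i Hi. rewrite binomR_C by lia. reflexivity.
Qed.

Lemma nabla_0 x k : nabla 0 x k = x k.
Proof. rewrite nabla_sumR. simpl. rewrite Nat.add_0_r. lra. Qed.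

Lemma nabla_S j x k : nabla (S j) x k = nabla j x k - nabla j x (S k).
Proof.
  rewrite !nabla_sumR, sumR_shift, binomR_n0, Nat.add_0_r. cbn [binomR].
  rewrite (sumR_ext (S j) _ (fun i => - ((-1) ^ i * binomR j i * x (S k + i)%nat)
                                     + (-1) ^ S i * binomR j (S i) * x (k + S i)%nat))
    by (intros; rewrite Nat.add_succ_r; simpl; lra).
  rewrite sumR_plus, sumR_opp.
  set (F := fun i => (-1) ^ i * binomR j i * x (k + i)%nat).
  assert (E : sumR (S j) F = F O + sumR (S j) (fun i => F (S i))).
  { rewrite <- sumR_shift. change (sumR (S (S j)) F) with (sumR (S j) F + F (S j)).
    unfold F at 3. rewrite binomR_gt by lia. ring. }
  rewrite E. unfold F. cbv beta. rewrite binomR_n0, Nat.add_0_r. simpl pow. lra.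
Qed.

Lemma binom_sum_nabla x r D :
  (r <= D)%nat -> binom_sum r (fun i => nabla i x (D - i)) = x (D - r)%nat.
Proof.
  revert D; induction r as [|r IH]; intros D H.
  - unfold binom_sum. simpl. rewrite nabla_0, Nat.sub_0_r. lra.
  - rewrite binom_sum_S.
    rewrite (binom_sum_ext r (fun i => nabla (S i) x (D - S i))
              (fun i => nabla i x (D - 1 - i) - nabla i x (D - i))).
    2:{ intros i Hi. rewrite nabla_S. do 2 f_equal; lia. }
    rewrite binom_sum_minus, !IH by lia. replace (D - 1 - r)%nat with (D - S r)%nat by lia. lra.
Qed.

(** * The counting form of [Fbar] *)

Definition count_gt (t : nat) (L : list nat) : nat := length (filter (Nat.ltb t) L).

Definition Fcount (b : nat -> R) (L : list nat) : R :=
  prodR (list_max L) (fun t => b (count_gt t L)).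

Definition coords (d : nat) (n : nat -> nat) : list nat := map n (seq 1 d).

Lemma In_le_list_max L y : In y L -> (y <= list_max L)%nat.
Proof.
  intros Hy. assert (H : (list_max L <= list_max L)%nat) by lia.
  apply list_max_le in H. rewrite Forall_forall in H. auto.
Qed.

Lemma list_max_le_In L a : (forall y, In y L -> (y <= a)%nat) -> (list_max L <= a)%nat.
Proof. intros H. apply list_max_le, Forall_forall. auto. Qed.

Lemma list_max_perm L L' : Permutation L L' -> list_max L = list_max L'.
Proof. induction 1; simpl; lia. Qed.

Lemma count_gt_perm t L L' : Permutation L L' -> count_gt t L = count_gt t L'.
Proof.
  unfold count_gt. induction 1; simpl; try lia.
  - destruct (t <? x); simpl; auto.
  - destruct (t <? x), (t <? y); simpl; lia.
Qed.

Lemma Fcount_perm b L L' : Permutation L L' -> Fcount b L = Fcount b L'.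
Proof.
  intros H. unfold Fcount. rewrite (list_max_perm _ _ H).
  apply prodR_ext. intros. rewrite (count_gt_perm _ _ _ H). reflexivity.
Qed.

Lemma count_gt_app t L1 L2 : count_gt t (L1 ++ L2) = (count_gt t L1 + count_gt t L2)%nat.
Proof. unfold count_gt. rewrite filter_app, length_app. reflexivity. Qed.

Lemma count_gt_above t L : (forall y, In y L -> (y <= t)%nat) -> count_gt t L = O.
Proof.
  unfold count_gt. induction L as [|a L IH]; simpl; intros H; auto.
  rewrite (proj2 (Nat.ltb_ge t a)) by auto. auto.
Qed.

Lemma count_gt_pos t L : (t < list_max L)%nat -> (1 <= count_gt t L)%nat.
Proof.
  unfold count_gt. induction L as [|a L IH]; simpl; intros H; [lia|].
  destruct (Nat.ltb_spec t a); simpl; [lia|]. apply IH. lia.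
Qed.

Lemma count_gt_le_length t L : (count_gt t L <= length L)%nat.
Proof. apply filter_length_le. Qed.

Definition ostat (s : list nat) (j : nat) : nat := match j with O => O | S j' => nth j' s O end.

Definition Fsorted (b : nat -> R) (s : list nat) : R :=
  prodR (length s) (fun i => b (S i) ^ (ostat s (length s - i) - ostat s (length s - S i))).

Lemma ostat_app s m j : (j <= length s)%nat -> ostat (s ++ [m]) j = ostat s j.
Proof. destruct j; simpl; auto. intros. rewrite app_nth1 by lia. reflexivity. Qed.

Lemma ostat_last s m : ostat (s ++ [m]) (S (length s)) = m.
Proof. simpl. rewrite app_nth2, Nat.sub_diag by lia. reflexivity. Qed.

Lemma StronglySorted_app_last (s : list nat) m : StronglySorted le (s ++ [m]) ->
  StronglySorted le s /\ (forall y, In y s -> (y <= m)%nat).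
Proof.
  induction s as [|a s IH]; simpl; intros H; [split; [constructor|easy]|].
  apply StronglySorted_inv in H as [H1 H2]. rewrite Forall_forall in H2.
  destruct (IH H1) as [H3 H4]. split.
  - constructor; auto. apply Forall_forall. intros; apply H2, in_or_app; auto.
  - intros y [<-|Hy]; auto. apply H2, in_or_app; simpl; auto.
Qed.

Lemma ostat_length_max s : StronglySorted le s -> ostat s (length s) = list_max s.
Proof.
  destruct s as [|a s _] using rev_ind; intros H; [reflexivity|].
  destruct (StronglySorted_app_last _ _ H) as [_ Hle].
  rewrite length_app, Nat.add_1_r, ostat_last, list_max_app. simpl.
  assert (list_max s <= a)%nat by (apply list_max_le_In; auto). lia.
Qed.

(* A new maximum [m] raises every count below [list_max s] by one, and the count is [1] on
   [list_max s <= t < m]. *)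
Lemma Fcount_app_max b s m : (forall y, In y s -> (y <= m)%nat) ->
  Fcount b (s ++ [m]) = Fcount (fun j => b (S j)) s * b 1%nat ^ (m - list_max s).
Proof.
  intros Hle. unfold Fcount. rewrite list_max_app. simpl list_max.
  assert (Hm : (list_max s <= m)%nat) by (apply list_max_le_In; auto).
  replace (Nat.max (list_max s) (Nat.max m 0)) with m by lia.
  rewrite (prodR_split m (list_max s)) by exact Hm. f_equal.
  - apply prodR_ext. intros t Ht. rewrite count_gt_app. unfold count_gt at 2. simpl.
    rewrite (proj2 (Nat.ltb_lt t m)) by lia. f_equal. simpl. lia.
  - rewrite <- prodR_const. apply prodR_ext. intros i Hi.
    rewrite count_gt_app, count_gt_above.
    + unfold count_gt. simpl. rewrite (proj2 (Nat.ltb_lt _ m)) by lia. reflexivity.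
    + intros y Hy. specialize (In_le_list_max s y Hy). lia.
Qed.

Lemma Fsorted_Fcount s : StronglySorted le s -> forall b, Fsorted b s = Fcount b s.
Proof.
  induction s as [|m s IH] using rev_ind; intros H b; [reflexivity|].
  destruct (StronglySorted_app_last _ _ H) as [Hs Hle].
  rewrite Fcount_app_max, <- IH, <- ostat_length_max by auto.
  unfold Fsorted. rewrite length_app, Nat.add_1_r, prodR_shift, Nat.sub_0_r, ostat_last.
  rewrite Nat.sub_1_r, Nat.pred_succ, ostat_app, Rmult_comm by lia. f_equal.
  apply prodR_ext. intros i Hi. rewrite !ostat_app by lia. do 3 f_equal; lia.
Qed.

Lemma sort_StronglySorted L : StronglySorted le (NatSort.sort L).
Proof.
  assert (H : StronglySorted (fun x y => is_true (NatOrder.leb x y)) (NatSort.sort L)).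
  { apply NatSort.StronglySorted_sort. intros x y z Hxy Hyz.
    unfold is_true in *. rewrite Nat.leb_le in *. lia. }
  induction H; constructor; auto.
  eapply Forall_impl; [|eauto]. intros y Hy. apply Nat.leb_le. exact Hy.
Qed.

Lemma Fbar_Fcount d beta n : Fbar d beta n = Fcount beta (coords d n).
Proof.
  assert (Hperm := NatSort.Permuted_sort (coords d n)).
  assert (Hlen : length (sorted_coords d n) = d).
  { change (length (NatSort.sort (coords d n)) = d). rewrite <- (Permutation_length Hperm).
    unfold coords. rewrite length_map, length_seq. reflexivity. }
  transitivity (Fsorted beta (sorted_coords d n)).
  - unfold Fbar, Fsorted. rewrite Hlen. apply prodR_ext. intros i Hi.
    replace (d - S i + 1)%nat with (d - i)%nat by lia. reflexivity.
  - rewrite Fsorted_Fcount by apply sort_StronglySorted.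
    apply Fcount_perm, Permutation_sym, Hperm.
Qed.

(** * The wide-sense geometric parameters *)

Definition card_coords (d : nat) (a : nat -> bool) : nat := length (filter a (seq 1 d)).

Definition subset_size (d m : nat) : nat := card_coords d (inI m).

Lemma all_coords_S d q : all_coords (S d) q = all_coords d q && q (S d).
Proof.
  unfold all_coords. rewrite seq_S, forallb_app. simpl. rewrite Bool.andb_true_r. reflexivity.
Qed.

Lemma card_coords_S d a : card_coords (S d) a = (card_coords d a + (if a (S d) then 1 else 0))%nat.
Proof.
  unfold card_coords. rewrite seq_S, filter_app, length_app. simpl. destruct (a (S d)); reflexivity.
Qed.

Lemma all_coords_ext d q1 q2 :
  (forall k, (1 <= k <= d)%nat -> q1 k = q2 k) -> all_coords d q1 = all_coords d q2.
Proof.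
  induction d as [|d IH]; intros H; auto.
  rewrite !all_coords_S, IH by (intros; apply H; lia). rewrite H by lia. reflexivity.
Qed.

Lemma card_coords_ext d q1 q2 :
  (forall k, (1 <= k <= d)%nat -> q1 k = q2 k) -> card_coords d q1 = card_coords d q2.
Proof.
  induction d as [|d IH]; intros H; auto.
  rewrite !card_coords_S, IH by (intros; apply H; lia). rewrite H by lia. reflexivity.
Qed.

Lemma card_coords_le d a : (card_coords d a <= d)%nat.
Proof. apply (Nat.le_trans _ _ _ (filter_length_le _ _)). rewrite length_seq. lia. Qed.

Lemma all_coords_true d : all_coords d (fun _ => true) = true.
Proof. induction d as [|d IH]; auto. rewrite all_coords_S, IH. reflexivity. Qed.

Lemma card_coords_false d : card_coords d (fun _ => false) = O.
Proof. unfold card_coords. induction (seq 1 d); auto. Qed.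

Lemma card_coords_single d k : (1 <= k <= d)%nat -> card_coords d (fun j => j =? k) = 1%nat.
Proof.
  induction d as [|d IH]; intros H; [lia|]. rewrite card_coords_S.
  destruct (Nat.eq_dec k (S d)) as [->|Hne].
  - rewrite Nat.eqb_refl, (card_coords_ext d _ (fun _ => false)), card_coords_false; auto.
    intros j Hj. apply Nat.eqb_neq. lia.
  - rewrite IH, (proj2 (Nat.eqb_neq (S d) k)) by lia. reflexivity.
Qed.

Lemma all_coords_single d k m : (1 <= k <= d)%nat ->
  all_coords d (fun j => implb (j =? k) (negb (inI m j))) = negb (inI m k).
Proof.
  induction d as [|d IH]; intros H; [lia|]. rewrite all_coords_S.
  destruct (Nat.eq_dec k (S d)) as [->|Hne].
  - rewrite Nat.eqb_refl, (all_coords_ext d _ (fun _ => true)), all_coords_true; auto.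
    intros j Hj. rewrite (proj2 (Nat.eqb_neq j (S d))) by lia. reflexivity.
  - rewrite IH, (proj2 (Nat.eqb_neq (S d) k)) by lia. apply Bool.andb_true_r.
Qed.

Lemma inI_below_pow2 m d : (m < 2 ^ d)%nat -> inI m (S d) = false.
Proof.
  intros H. unfold inI. rewrite Nat.sub_1_r, Nat.pred_succ.
  apply Nat.testbit_false. rewrite Nat.div_small; auto.
Qed.

Lemma inI_add_pow2 m d k : (m < 2 ^ d)%nat -> (1 <= k <= S d)%nat ->
  inI (2 ^ d + m) k = (k =? S d) || inI m k.
Proof.
  intros Hm Hk. unfold inI. destruct (Nat.eqb_spec k (S d)) as [->|Hne]; simpl orb.
  - rewrite Nat.sub_1_r, Nat.pred_succ. apply Nat.testbit_true.
    replace (2 ^ d + m)%nat with (m + 1 * 2 ^ d)%nat by lia.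
    rewrite Nat.div_add, Nat.div_small by (auto || apply Nat.pow_nonzero; lia). reflexivity.
  - rewrite <- (Nat.mod_pow2_bits_low _ d) by lia.
    replace (2 ^ d + m)%nat with (m + 1 * 2 ^ d)%nat by lia.
    rewrite Nat.Div0.mod_add, Nat.mod_small by auto. reflexivity.
Qed.

Definition avoids (d : nat) (a : nat -> bool) (m : nat) : bool :=
  all_coords d (fun k => implb (a k) (negb (inI m k))).

Lemma avoids_below_pow2 d a m : (m < 2 ^ d)%nat ->
  avoids (S d) a m = avoids d a m /\ subset_size (S d) m = subset_size d m.
Proof.
  intros Hm. unfold avoids, subset_size.
  rewrite all_coords_S, card_coords_S, inI_below_pow2 by auto.
  rewrite Bool.implb_true_r, Bool.andb_true_r, Nat.add_0_r. split; reflexivity.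
Qed.

Lemma avoids_add_pow2 d a m : (m < 2 ^ d)%nat ->
  avoids (S d) a (2 ^ d + m) = negb (a (S d)) && avoids d a m /\
  subset_size (S d) (2 ^ d + m) = S (subset_size d m).
Proof.
  intros Hm. unfold avoids, subset_size.
  rewrite all_coords_S, card_coords_S, inI_add_pow2, Nat.eqb_refl by (auto || lia).
  rewrite (all_coords_ext d _ (fun k => implb (a k) (negb (inI m k)))),
    (card_coords_ext d _ (inI m)).
  - simpl orb. split; [|lia].
    destruct (a (S d)); simpl; auto using Bool.andb_false_r, Bool.andb_true_r.
  - intros k Hk. rewrite inI_add_pow2, (proj2 (Nat.eqb_neq k (S d))) by (auto || lia). reflexivity.
  - intros k Hk. rewrite inI_add_pow2, (proj2 (Nat.eqb_neq k (S d))) by (auto || lia). reflexivity.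
Qed.

Lemma sum_subsets_avoiding d : forall a f,
  sumR (2 ^ d) (fun m => if avoids d a m then f (subset_size d m) else 0)
  = binom_sum (d - card_coords d a) f.
Proof.
  induction d as [|d IH]; intros a f.
  { unfold binom_sum, avoids, subset_size, card_coords. simpl. lra. }
  replace (2 ^ S d)%nat with (2 ^ d + 2 ^ d)%nat by (simpl; lia).
  rewrite sumR_add, card_coords_S.
  transitivity (sumR (2 ^ d) (fun m => if avoids d a m then f (subset_size d m) else 0)
    + sumR (2 ^ d) (fun m => if negb (a (S d)) && avoids d a m
                             then f (S (subset_size d m)) else 0)).
  { f_equal; apply sumR_ext; intros m Hm.
    - destruct (avoids_below_pow2 d a m Hm) as [-> ->]; reflexivity.
    - destruct (avoids_add_pow2 d a m Hm) as [-> ->]; reflexivity. }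
  rewrite IH. pose proof (card_coords_le d a). destruct (a (S d)); cbn [negb andb].
  - rewrite sumR_zero.
    replace (S d - (card_coords d a + 1))%nat with (d - card_coords d a)%nat by lia. lra.
  - rewrite (IH a (fun i => f (S i))), Nat.add_0_r, Nat.sub_succ_l, binom_sum_S by lia. reflexivity.
Qed.

Definition xseq (beta : nat -> R) (k : nat) : R := if Nat.eqb k 0 then 1 else beta k.

(* Chosen so that, by binomial inversion, a trial avoids a given set of [a] coordinates
   with probability [x_a]. *)
Definition wsg_param (d : nat) (beta : nat -> R) (m : nat) : R :=
  nabla (subset_size d m) (xseq beta) (d - subset_size d m).

Lemma wsg_avoid_prob d beta a :
  sumSubsets d (avoids d a) (wsg_param d beta) = xseq beta (card_coords d a).
Proof.
  pose proof (card_coords_le d a).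
  change (sumR (2 ^ d) (fun m => if avoids d a m
            then (fun i => nabla i (xseq beta) (d - i)) (subset_size d m) else 0)
          = xseq beta (card_coords d a)).
  rewrite sum_subsets_avoiding, binom_sum_nabla by lia. f_equal. lia.
Qed.

Lemma card_coords_count_gt d n t : card_coords d (fun k => S t <=? n k) = count_gt t (coords d n).
Proof.
  unfold card_coords, count_gt, coords.
  induction (seq 1 d) as [|a l IH]; cbn [filter map length]; auto.
  unfold Nat.ltb. destruct (S t <=? n a); cbn [length]; rewrite IH; reflexivity.
Qed.

Lemma WSG_surv_Fcount d beta n : WSG_surv d (wsg_param d beta) n = Fcount beta (coords d n).
Proof.
  unfold WSG_surv, Fcount. apply prodR_ext. intros t Ht.
  change (sumSubsets d (avoids d (fun k => S t <=? n k)) (wsg_param d beta)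
          = beta (count_gt t (coords d n))).
  rewrite (wsg_avoid_prob d beta (fun k => S t <=? n k)), card_coords_count_gt.
  unfold xseq. destruct (count_gt t (coords d n)) eqn:E; [|reflexivity].
  pose proof (count_gt_pos t (coords d n) Ht). lia.
Qed.

Lemma WSG_surv_Fbar d beta n : WSG_surv d (wsg_param d beta) n = Fbar d beta n.
Proof. rewrite WSG_surv_Fcount, Fbar_Fcount. reflexivity. Qed.

Lemma Fbar_exchangeable d beta : Exchangeable d (Fbar d beta).
Proof.
  intros sigma [Hrange Hinj] n. rewrite !Fbar_Fcount. apply Fcount_perm. unfold coords.
  rewrite <- (map_map sigma n). apply Permutation_map, Permutation_map_same_l.
  - apply FinFun.Injective_map_NoDup_in; [|apply seq_NoDup].
    intros x y Hx Hy. apply in_seq in Hx, Hy. apply Hinj; lia.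
  - intros y Hy. apply in_map_iff in Hy as [x [<- Hx]]. apply in_seq in Hx.
    apply in_seq. specialize (Hrange x ltac:(lia)). lia.
Qed.

Lemma wsg_param_nonneg d beta : InM d (xseq beta) -> forall m, 0 <= wsg_param d beta m.
Proof.
  intros (_ & _ & Hn) m. pose proof (card_coords_le d (inI m)).
  apply Hn; unfold subset_size; lia.
Qed.

Lemma wsg_param_total d beta : sumSubsets d (fun _ => true) (wsg_param d beta) = 1.
Proof.
  transitivity (sumSubsets d (avoids d (fun _ => false)) (wsg_param d beta)).
  - unfold sumSubsets, avoids. apply sumR_ext. intros m _. rewrite all_coords_true. reflexivity.
  - rewrite wsg_avoid_prob, card_coords_false. reflexivity.
Qed.

Lemma wsg_param_WSGParams d beta : InM d (xseq beta) -> WSGParams d (wsg_param d beta).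
Proof.
  intros HM. pose proof (wsg_param_nonneg d beta HM) as Hnn.
  split; [|split; [apply wsg_param_total|]].
  - intros m Hm. split; auto. rewrite <- (wsg_param_total d beta).
    apply (sumR_term_le (2 ^ d) (fun m => wsg_param d beta m)); auto.
  - intros k Hk.
    replace (sumSubsets d (fun m => negb (inI m k)) (wsg_param d beta))
      with (sumSubsets d (avoids d (fun j => j =? k)) (wsg_param d beta)).
    + rewrite wsg_avoid_prob, card_coords_single by auto. apply HM.
    + unfold sumSubsets, avoids. apply sumR_ext. intros m _.
      rewrite all_coords_single by auto. reflexivity.
Qed.

(** * Box sums of backward differences *)

Lemma upd_eq v k a : upd v k a k = a.
Proof. unfold upd. rewrite Nat.eqb_refl. reflexivity. Qed.

Lemma upd_neq v k a i : i <> k -> upd v k a i = v i.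
Proof. intros H. unfold upd. rewrite (proj2 (Nat.eqb_neq i k) H). reflexivity. Qed.

Lemma upd_comm v j k a b : j <> k -> upd (upd v j a) k b = upd (upd v k b) j a.
Proof.
  intros H. apply functional_extensionality. intros i. unfold upd.
  destruct (Nat.eqb_spec i k), (Nat.eqb_spec i j); subst; auto. lia.
Qed.

Lemma upd_upd v k a b : upd (upd v k a) k b = upd v k b.
Proof. apply functional_extensionality. intros i. unfold upd. destruct (i =? k); reflexivity. Qed.

Definition pred_at (v : nat -> nat) (c : nat) : nat -> nat := upd v c (v c - 1)%nat.

Definition diff_at (c : nat) (H : (nat -> nat) -> R) (v : nat -> nat) : R :=
  H (pred_at v c) - H v.

Fixpoint diff_upto (k : nat) (H : (nat -> nat) -> R) : (nat -> nat) -> R :=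
  match k with O => H | S k' => diff_upto k' (diff_at (S k') H) end.

(* The alternating sum of [H] over the corners of the box [(lo, M]] in the coordinates [1..k]. *)
Fixpoint box_incr (k : nat) (lo : nat -> nat) (M : nat) (H : (nat -> nat) -> R) : R :=
  match k with
  | O => H (fun _ => O)
  | S k' => box_incr k' lo M
              (fun w => H (upd w (S k') (Nat.min (lo (S k')) M)) - H (upd w (S k') M))
  end.

Lemma pred_at_upd_neq v j k a : j <> k -> pred_at (upd v k a) j = upd (pred_at v j) k a.
Proof. intros H. unfold pred_at. rewrite upd_neq by auto. apply upd_comm. auto. Qed.

Lemma pred_at_upd_eq v k a : pred_at (upd v k a) k = upd v k (a - 1)%nat.
Proof. unfold pred_at. rewrite upd_eq. apply upd_upd. Qed.

Lemma diff_upto_upd j : forall H v k a, (j < k)%nat ->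
  diff_upto j H (upd v k a) = diff_upto j (fun w => H (upd w k a)) v.
Proof.
  induction j as [|j IH]; intros H v k a Hjk; simpl; auto.
  rewrite IH by lia. f_equal. apply functional_extensionality. intros w.
  unfold diff_at. rewrite pred_at_upd_neq by lia. reflexivity.
Qed.

Lemma box_incr_zero k lo M : box_incr k lo M (fun _ => 0) = 0.
Proof.
  induction k as [|k IH]; simpl; auto. rewrite <- IH. f_equal.
  apply functional_extensionality; intros; lra.
Qed.

Lemma box_incr_minus k lo M : forall A1 A2,
  box_incr k lo M (fun w => A1 w - A2 w) = box_incr k lo M A1 - box_incr k lo M A2.
Proof.
  induction k as [|k IH]; intros A1 A2; simpl; auto. rewrite <- IH. f_equal.
  apply functional_extensionality; intros; lra.
Qed.

Lemma box_incr_sumR k lo M : forall N (F : nat -> (nat -> nat) -> R),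
  box_incr k lo M (fun w => sumR N (fun t => F t w)) = sumR N (fun t => box_incr k lo M (F t)).
Proof.
  induction k as [|k IH]; intros N F; simpl; auto. rewrite <- IH. f_equal.
  apply functional_extensionality; intros w. rewrite sumR_minus. reflexivity.
Qed.

Lemma sumR_telescope a M (h : nat -> R) :
  sumR M (fun t => if a <=? t then h t - h (S t) else 0) = h (Nat.min a M) - h M.
Proof.
  induction M as [|M IH]; simpl; [rewrite Nat.min_0_r; lra|].
  rewrite IH. destruct (Nat.leb_spec a M).
  - rewrite !Nat.min_l by lia. lra.
  - rewrite !Nat.min_r by lia. lra.
Qed.

Lemma boxsum_diff_upto k lo M : forall H, boxsum k lo M (diff_upto k H) = box_incr k lo M H.
Proof.
  induction k as [|k IH]; intros H; simpl; auto.
  transitivity (sumR M (fun t => box_incr k lo M (fun w =>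
    if lo (S k) <=? t then H (upd w (S k) t) - H (upd w (S k) (S t)) else 0))).
  - apply sumR_ext. intros t Ht. destruct (lo (S k) <=? t); [|rewrite box_incr_zero; auto].
    rewrite <- IH. f_equal. apply functional_extensionality. intros v.
    rewrite diff_upto_upd by lia. f_equal. apply functional_extensionality. intros w.
    unfold diff_at. rewrite pred_at_upd_eq, Nat.sub_1_r, Nat.pred_succ. reflexivity.
  - rewrite <- box_incr_sumR. f_equal. apply functional_extensionality. intros w.
    apply (sumR_telescope (lo (S k)) M (fun t => H (upd w (S k) t))).
Qed.

Lemma box_incr_bound k lo M : forall H B,
  (forall w, Rabs (H w) <= B) -> Rabs (box_incr k lo M H) <= 2 ^ k * B.
Proof.
  induction k as [|k IH]; intros H B HB; simpl; [specialize (HB (fun _ => O)); lra|].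
  enough (Rabs (box_incr k lo M (fun w => H (upd w (S k) (Nat.min (lo (S k)) M))
                                         - H (upd w (S k) M))) <= 2 ^ k * (2 * B)) by lra.
  apply IH. intros w. eapply Rle_trans; [apply Rabs_triang|]. rewrite Rabs_Ropp.
  pose proof (HB (upd w (S k) (Nat.min (lo (S k)) M))). pose proof (HB (upd w (S k) M)). lra.
Qed.

Definition restrict (k : nat) (lo : nat -> nat) : nat -> nat :=
  fun i => if (1 <=? i) && (i <=? k) then lo i else O.

Lemma restrict_0 lo : restrict 0 lo = fun _ => O.
Proof.
  apply functional_extensionality. intros i. unfold restrict.
  destruct (Nat.leb_spec 1 i), (Nat.leb_spec i 0); simpl; auto; lia.
Qed.

Lemma restrict_S k lo : restrict (S k) lo = upd (restrict k lo) (S k) (lo (S k)).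
Proof.
  apply functional_extensionality. intros i. unfold restrict, upd.
  destruct (Nat.eqb_spec i (S k)) as [->|Hne]; [rewrite Nat.leb_refl; reflexivity|].
  destruct (Nat.leb_spec 1 i), (Nat.leb_spec i k), (Nat.leb_spec i (S k)); simpl; auto; lia.
Qed.

Lemma box_incr_approx k lo M : forall H B, 0 <= B ->
  (forall j, (1 <= j <= k)%nat -> (lo j <= M)%nat) ->
  (forall w j, (1 <= j <= k)%nat -> Rabs (H (upd w j M)) <= B) ->
  Rabs (box_incr k lo M H - H (restrict k lo)) <= INR k * 2 ^ k * B.
Proof.
  induction k as [|k IH]; intros H B HB0 Hlo HB; cbn [box_incr].
  { rewrite restrict_0, Rminus_diag, Rabs_R0. simpl. lra. }
  rewrite Nat.min_l, box_incr_minus, restrict_S by (apply Hlo; lia).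
  set (H0 := fun w => H (upd w (S k) (lo (S k)))).
  assert (I1 : Rabs (box_incr k lo M H0 - H0 (restrict k lo)) <= INR k * 2 ^ k * B).
  { apply IH; auto; [intros j Hj; apply Hlo; lia|].
    intros w j Hj. unfold H0. rewrite upd_comm by lia. apply HB. lia. }
  assert (I2 : Rabs (box_incr k lo M (fun w => H (upd w (S k) M))) <= 2 ^ k * B)
    by (apply box_incr_bound; intros w; apply HB; lia).
  fold (H0 (restrict k lo)). rewrite S_INR.
  pose proof (pow_le 2 k ltac:(lra)). pose proof (pos_INR k).
  assert (0 <= 2 ^ k * B) by (apply Rmult_le_pos; auto).
  assert (0 <= INR k * 2 ^ k * B) by (apply Rmult_le_pos; [apply Rmult_le_pos|]; auto).
  eapply Rle_trans.
  { replace (box_incr k lo M H0 - box_incr k lo M (fun w => H (upd w (S k) M)) - H0 (restrict k lo))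
      with ((box_incr k lo M H0 - H0 (restrict k lo))
            + - box_incr k lo M (fun w => H (upd w (S k) M)))
      by ring.
    apply Rabs_triang. }
  rewrite Rabs_Ropp. simpl pow. nra.
Qed.

Lemma boxsum_ext_pos k lo M : forall g1 g2,
  (forall v, (forall j, (1 <= j <= k)%nat -> (1 <= v j)%nat) -> g1 v = g2 v) ->
  boxsum k lo M g1 = boxsum k lo M g2.
Proof.
  induction k as [|k IH]; intros g1 g2 H; simpl; [apply H; intros; lia|].
  apply sumR_ext. intros t Ht. destruct (lo (S k) <=? t); auto. apply IH. intros v Hv. apply H.
  intros j Hj. destruct (Nat.eq_dec j (S k)) as [->|Hne].
  - rewrite upd_eq. lia.
  - rewrite upd_neq by auto. apply Hv. lia.
Qed.

(** * Point masses of the wide-sense geometric law *)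

(* Whether the outcome [m] of trial [t + 1] is compatible with [tau_k = v k] (if [Q k]) or with
   [tau_k > v k] (otherwise). *)
Definition trial_ok (Q : nat -> bool) (v : nat -> nat) (t m k : nat) : bool :=
  if Q k then implb (S (S t) <=? v k) (negb (inI m k)) && implb (v k =? S t) (inI m k)
  else implb (S t <=? v k) (negb (inI m k)).

(* For [T >= max v]: the probability that [tau_k = v k] for [k] in [Q] and [tau_k > v k]
   otherwise. *)
Definition mixed_prob (d : nat) (pt : nat -> R) (Q : nat -> bool) (T : nat) (v : nat -> nat) : R :=
  prodR T (fun t => sumSubsets d (fun m => all_coords d (trial_ok Q v t m)) pt).

Lemma all_coords_split d c q : (1 <= c <= d)%nat ->
  all_coords d q = all_coords d (fun k => if k =? c then true else q k) && q c.
Proof.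
  induction d as [|d IH]; intros H; [lia|]. rewrite !all_coords_S.
  destruct (Nat.eq_dec c (S d)) as [->|Hne].
  - rewrite Nat.eqb_refl, (all_coords_ext d (fun k => if k =? S d then true else q k) q).
    + destruct (all_coords d q), (q (S d)); reflexivity.
    + intros k Hk. rewrite (proj2 (Nat.eqb_neq k (S d))) by lia. reflexivity.
  - rewrite IH, (proj2 (Nat.eqb_neq (S d) c)) by lia.
    destruct (q c), (q (S d)); rewrite ?andb_true_r, ?andb_false_r; reflexivity.
Qed.

Lemma sumSubsets_split_coord d c pt (q1 q2 q3 : nat -> nat -> bool) : (1 <= c <= d)%nat ->
  (forall m k, k <> c -> q2 m k = q1 m k /\ q3 m k = q1 m k) ->
  (forall m, q1 m c = true /\ q3 m c = negb (q2 m c)) ->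
  sumSubsets d (fun m => all_coords d (q1 m)) pt - sumSubsets d (fun m => all_coords d (q2 m)) pt
  = sumSubsets d (fun m => all_coords d (q3 m)) pt.
Proof.
  intros Hc Hoff Hc'. unfold sumSubsets. rewrite <- sumR_minus. apply sumR_ext. intros m _.
  rewrite (all_coords_split d c (q1 m)), (all_coords_split d c (q2 m)),
    (all_coords_split d c (q3 m)) by auto.
  rewrite (all_coords_ext d (fun k => if k =? c then true else q2 m k)
                           (fun k => if k =? c then true else q1 m k)),
          (all_coords_ext d (fun k => if k =? c then true else q3 m k)
                           (fun k => if k =? c then true else q1 m k)).
  - destruct (Hc' m) as [-> ->]. destruct (all_coords d _), (q2 m c); simpl; lra.
  - intros k _. destruct (Nat.eqb_spec k c); [reflexivity|]. apply Hoff; auto.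
  - intros k _. destruct (Nat.eqb_spec k c); [reflexivity|]. apply Hoff; auto.
Qed.

Lemma trial_ok_pred_at_other Q v c t m k : k <> c ->
  trial_ok Q (pred_at v c) t m k = trial_ok Q v t m k.
Proof. intros H. unfold trial_ok, pred_at. rewrite upd_neq by auto. reflexivity. Qed.

Lemma trial_ok_pred_at_same Q Q' v c t m : Q c = false -> Q' c = true -> (1 <= v c)%nat ->
  if S t =? v c
  then trial_ok Q (pred_at v c) t m c = true /\ trial_ok Q' v t m c = negb (trial_ok Q v t m c)
  else trial_ok Q (pred_at v c) t m c = trial_ok Q' v t m c
       /\ trial_ok Q v t m c = trial_ok Q' v t m c.
Proof.
  intros HQ HQ' Hv. unfold trial_ok, pred_at. rewrite HQ, HQ', upd_eq.
  destruct (Nat.eqb_spec (S t) (v c)), (Nat.leb_spec (S t) (v c - 1)),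
    (Nat.leb_spec (S (S t)) (v c)), (Nat.eqb_spec (v c) (S t)), (Nat.leb_spec (S t) (v c)),
    (inI m c); simpl; auto; lia.
Qed.

(* Differencing in a coordinate [c] with [tau_c > .] turns it into a coordinate with [tau_c = .]. *)
Lemma mixed_prob_diff d pt Q Q' T v c : (1 <= c <= d)%nat -> Q c = false -> Q' c = true ->
  (forall k, k <> c -> Q' k = Q k) -> (1 <= v c <= T)%nat ->
  mixed_prob d pt Q T (pred_at v c) - mixed_prob d pt Q T v = mixed_prob d pt Q' T v.
Proof.
  intros Hc HQ HQ' HQQ Hv. unfold mixed_prob.
  assert (Hoff : forall t m k, k <> c -> trial_ok Q (pred_at v c) t m k = trial_ok Q v t m k
                                  /\ trial_ok Q' v t m k = trial_ok Q v t m k).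
  { intros t m k Hk. rewrite trial_ok_pred_at_other by auto. unfold trial_ok. rewrite HQQ; auto. }
  apply (prodR_sub_one_factor T (v c - 1)); [lia| |].
  - intros t Ht Hts.
    assert (E : forall m k, trial_ok Q (pred_at v c) t m k = trial_ok Q' v t m k
                            /\ trial_ok Q v t m k = trial_ok Q' v t m k).
    { intros m k. destruct (Nat.eq_dec k c) as [->|Hk].
      - pose proof (trial_ok_pred_at_same Q Q' v c t m HQ HQ' ltac:(lia)) as Hsame.
        rewrite (proj2 (Nat.eqb_neq (S t) (v c))) in Hsame by lia. exact Hsame.
      - destruct (Hoff t m k Hk) as [-> ->]. auto. }
    split; unfold sumSubsets; apply sumR_ext; intros m _;
      rewrite (all_coords_ext d _ (trial_ok Q' v t m)) by (intros k _; apply E); reflexivity.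
  - apply (sumSubsets_split_coord d c); auto.
    + intros m k Hk. destruct (Hoff (v c - 1)%nat m k Hk). split; congruence.
    + intros m. pose proof (trial_ok_pred_at_same Q Q' v c (v c - 1) m HQ HQ' ltac:(lia)) as Hsame.
      rewrite (proj2 (Nat.eqb_eq (S (v c - 1)) (v c))) in Hsame by lia. exact Hsame.
Qed.

Definition after (k' : nat) : nat -> bool := fun k => k' <? k.

Lemma le_maxcoord d w c : (1 <= c <= d)%nat -> (w c <= maxcoord d w)%nat.
Proof. intros Hc. apply In_le_list_max, in_map, in_seq. lia. Qed.

Lemma maxcoord_pred_at d w c : (maxcoord d (pred_at w c) <= maxcoord d w)%nat.
Proof.
  apply list_max_le_In. intros y Hy. apply in_map_iff in Hy as [j [<- Hj]].
  apply in_seq in Hj. eapply Nat.le_trans; [|apply (le_maxcoord d w j); lia].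
  unfold pred_at, upd. destruct (Nat.eqb_spec j c) as [->|]; lia.
Qed.

Lemma diff_upto_mixed_prob d pt T k' : (k' <= d)%nat -> forall H,
  (forall w, (forall i, (k' < i <= d)%nat -> (1 <= w i)%nat) -> (maxcoord d w <= T)%nat ->
     H w = mixed_prob d pt (after k') T w) ->
  forall v, (forall i, (1 <= i <= d)%nat -> (1 <= v i)%nat) -> (maxcoord d v <= T)%nat ->
  diff_upto k' H v = mixed_prob d pt (after 0) T v.
Proof.
  induction k' as [|k' IH]; intros Hk H HH v Hv HvT; simpl.
  { apply HH; [intros; apply Hv; lia|exact HvT]. }
  apply IH; [lia| |exact Hv|exact HvT]. intros w Hw HwT. unfold diff_at.
  pose proof (maxcoord_pred_at d w (S k')). pose proof (le_maxcoord d w (S k') ltac:(lia)).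
  rewrite (HH (pred_at w (S k'))), (HH w); auto; try lia.
  - apply mixed_prob_diff; unfold after; try lia.
    + apply Nat.ltb_ge. lia.
    + apply Nat.ltb_lt. lia.
    + intros k Hkk. destruct (Nat.ltb_spec k' k), (Nat.ltb_spec (S k') k); auto; lia.
    + split; [apply Hw|]; lia.
  - intros i Hi. apply Hw. lia.
  - intros i Hi. unfold pred_at. rewrite upd_neq by lia. apply Hw. lia.
Qed.

Lemma WSG_surv_mixed_prob d pt T w :
  sumSubsets d (fun _ => true) pt = 1 -> (maxcoord d w <= T)%nat ->
  WSG_surv d pt w = mixed_prob d pt (after d) T w.
Proof.
  intros Htot HT. unfold WSG_surv, mixed_prob. rewrite (prodR_split T (maxcoord d w)) by auto.
  rewrite (prodR_ext (T - maxcoord d w) _ (fun _ => 1)), prodR_const, pow1, Rmult_1_r.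
  - apply prodR_ext. intros t Ht. unfold sumSubsets. apply sumR_ext. intros m _.
    rewrite (all_coords_ext d (trial_ok (after d) w t m)
               (fun k => implb (S t <=? w k) (negb (inI m k)))); [reflexivity|].
    intros k Hk. unfold trial_ok, after. rewrite (proj2 (Nat.ltb_ge d k)) by lia. reflexivity.
  - intros i _. rewrite <- Htot. unfold sumSubsets. apply sumR_ext. intros m _.
    rewrite (all_coords_ext d _ (fun _ => true)), all_coords_true; [reflexivity|].
    intros k Hk. unfold trial_ok, after. rewrite (proj2 (Nat.ltb_ge d k)) by lia.
    pose proof (le_maxcoord d w k Hk).
    rewrite (proj2 (Nat.leb_gt (S (maxcoord d w + i)) (w k))) by lia. reflexivity.
Qed.

Definition wsg_pmf (d : nat) (pt : nat -> R) (v : nat -> nat) : R :=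
  mixed_prob d pt (after 0) (maxcoord d v) v.

Lemma wsg_pmf_nonneg d pt : (forall m, (m < 2 ^ d)%nat -> 0 <= pt m) ->
  forall v, 0 <= wsg_pmf d pt v.
Proof.
  intros Hpt v. apply prodR_nonneg. intros t _. apply sumR_nonneg. intros m Hm.
  destruct (all_coords _ _); [apply Hpt; auto|lra].
Qed.

Lemma diff_upto_WSG_surv d pt v : sumSubsets d (fun _ => true) pt = 1 ->
  (forall i, (1 <= i <= d)%nat -> (1 <= v i)%nat) ->
  diff_upto d (WSG_surv d pt) v = wsg_pmf d pt v.
Proof.
  intros Htot Hv. apply (diff_upto_mixed_prob d pt (maxcoord d v) d); auto.
  intros w _ Hw. apply WSG_surv_mixed_prob; auto.
Qed.

Lemma boxsum_wsg_pmf d pt lo M : sumSubsets d (fun _ => true) pt = 1 ->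
  boxsum d lo M (wsg_pmf d pt) = box_incr d lo M (WSG_surv d pt).
Proof.
  intros Htot. rewrite <- boxsum_diff_upto. apply boxsum_ext_pos.
  intros v Hv. symmetry. apply diff_upto_WSG_surv; auto.
Qed.

Lemma InM_beta_bounds d beta : InM d (xseq beta) ->
  forall c, (1 <= c <= d)%nat -> 0 <= beta c <= beta 1%nat.
Proof.
  intros (_ & _ & Hn).
  induction c as [|c IH]; intros Hc; [lia|]. destruct c as [|c].
  - specialize (Hn 1%nat 0%nat ltac:(lia) ltac:(lia)).
    rewrite nabla_0 in Hn. unfold xseq in Hn. simpl in Hn. lra.
  - specialize (IH ltac:(lia)).
    pose proof (Hn (S c) 1%nat ltac:(lia) ltac:(lia)) as H1.
    pose proof (Hn (S (S c)) 0%nat ltac:(lia) ltac:(lia)) as H0.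
    rewrite nabla_S, !nabla_0 in H1. rewrite nabla_0 in H0.
    unfold xseq in H0, H1. simpl in H0, H1. lra.
Qed.

Lemma pow_le_pow_of_le_1 r M N : 0 <= r <= 1 -> (M <= N)%nat -> r ^ N <= r ^ M.
Proof.
  intros Hr H. induction H as [|N _ IH]; [lra|]. simpl.
  pose proof (pow_le r N ltac:(lra)). nra.
Qed.

Lemma Fcount_upd_le d beta w j M : InM d (xseq beta) -> (1 <= j <= d)%nat ->
  Rabs (Fcount beta (coords d (upd w j M))) <= beta 1%nat ^ M.
Proof.
  intros HM Hj. set (L := coords d (upd w j M)).
  assert (HL : length L = d) by (unfold L, coords; rewrite length_map, length_seq; auto).
  assert (HML : (M <= list_max L)%nat)
    by (pose proof (le_maxcoord d (upd w j M) j Hj) as H; rewrite upd_eq in H; exact H).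
  assert (Hb1 : beta 1%nat < 1) by apply HM.
  assert (Hf : forall t, (t < list_max L)%nat -> 0 <= beta (count_gt t L) <= beta 1%nat).
  { intros t Ht. apply (InM_beta_bounds d); auto.
    pose proof (count_gt_pos t L Ht). pose proof (count_gt_le_length t L). lia. }
  pose proof (InM_beta_bounds d beta HM 1%nat ltac:(lia)).
  rewrite Rabs_right by (apply Rle_ge, prodR_nonneg; intros; apply Hf; auto).
  eapply Rle_trans; [apply prodR_le_pow, Hf|]. apply pow_le_pow_of_le_1; auto. lra.
Qed.

Lemma Un_cv_geometric_bound u l K r N0 : 0 <= K -> 0 <= r < 1 ->
  (forall M, (N0 <= M)%nat -> Rabs (u M - l) <= K * r ^ M) -> Un_cv u l.
Proof.
  intros HK Hr Hu eps Heps.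
  destruct (pow_lt_1_zero r ltac:(rewrite Rabs_right; lra) (eps / (K + 1))
              ltac:(apply Rdiv_lt_0_compat; lra)) as [N1 HN1].
  exists (Nat.max N0 N1). intros M HM. unfold R_dist.
  specialize (HN1 M ltac:(lia)). rewrite Rabs_right in HN1 by (apply Rle_ge, pow_le; lra).
  eapply Rle_lt_trans; [apply Hu; lia|].
  apply (Rle_lt_trans _ (K * (eps / (K + 1)))); [apply Rmult_le_compat_l; lra|].
  apply (Rmult_lt_reg_r (K + 1)); [lra|]. field_simplify; lra.
Qed.

Lemma coords_restrict d lo : coords d (restrict d lo) = coords d lo.
Proof.
  apply map_ext_in. intros i Hi. apply in_seq in Hi. unfold restrict.
  rewrite (proj2 (Nat.leb_le 1 i)), (proj2 (Nat.leb_le i d)) by lia. reflexivity.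
Qed.

Lemma boxsum_wsg_pmf_cv d beta n : (1 <= d)%nat -> InM d (xseq beta) ->
  Un_cv (fun M => boxsum d n M (wsg_pmf d (wsg_param d beta))) (Fbar d beta n).
Proof.
  intros Hd HM. pose proof (InM_beta_bounds d beta HM 1%nat ltac:(lia)) as Hb.
  assert (Hb1 : beta 1%nat < 1) by apply HM.
  apply (Un_cv_geometric_bound _ _ (INR d * 2 ^ d) (beta 1%nat) (maxcoord d n)).
  - apply Rmult_le_pos; [apply pos_INR|apply pow_le; lra].
  - lra.
  - intros M HMn. rewrite boxsum_wsg_pmf by apply wsg_param_total.
    replace (Fbar d beta n) with (WSG_surv d (wsg_param d beta) (restrict d n))
      by (rewrite WSG_surv_Fcount, coords_restrict, Fbar_Fcount; reflexivity).
    apply box_incr_approx.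
    + apply pow_le. lra.
    + intros j Hj. pose proof (le_maxcoord d n j Hj). lia.
    + intros w j Hj. rewrite WSG_surv_Fcount. apply Fcount_upd_le; auto.
Qed.

Lemma Fbar_zero d beta : Fbar d beta (fun _ => O) = 1.
Proof.
  rewrite Fbar_Fcount. unfold Fcount.
  replace (list_max (coords d (fun _ => O))) with O; [reflexivity|].
  symmetry. apply Nat.le_0_r, list_max_le_In. intros y Hy.
  apply in_map_iff in Hy as [? [<- _]]. lia.
Qed.

Lemma InM_IsDiscreteSurvival d beta : (1 <= d)%nat -> InM d (xseq beta) ->
  IsDiscreteSurvival d (Fbar d beta).
Proof.
  intros Hd HM. exists (wsg_pmf d (wsg_param d beta)). split; [|split].
  - apply wsg_pmf_nonneg. intros m _. apply wsg_param_nonneg; auto.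
  - rewrite <- (Fbar_zero d beta). apply boxsum_wsg_pmf_cv; auto.
  - intros n. apply boxsum_wsg_pmf_cv; auto.
Qed.

(** * The converse *)

(* The sum of [g v] over [v] in [{1..M}^k] with [P c (v c - 1)] for every coordinate [c]. *)
Fixpoint boxsumP (k : nat) (P : nat -> nat -> bool) (M : nat) (g : (nat -> nat) -> R) : R :=
  match k with
  | O => g (fun _ => O)
  | S k' => sumR M (fun t => if P (S k') t then boxsumP k' P M (fun v => g (upd v (S k') (S t)))
                             else 0)
  end.

Lemma boxsum_boxsumP k lo M : forall g, boxsum k lo M g = boxsumP k (fun c t => lo c <=? t) M g.
Proof.
  induction k as [|k IH]; intros g; simpl; auto. apply sumR_ext. intros. rewrite IH. reflexivity.
Qed.

Lemma boxsumP_ext k M : forall (P P' : nat -> nat -> bool) g,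
  (forall c t, (1 <= c <= k)%nat -> P c t = P' c t) -> boxsumP k P M g = boxsumP k P' M g.
Proof.
  induction k as [|k IH]; intros P P' g H; simpl; auto. apply sumR_ext. intros t _.
  rewrite H by lia. destruct (P' (S k) t); auto. apply IH. intros; apply H; lia.
Qed.

Lemma boxsumP_split_coord k M c : forall (P P1 P2 : nat -> nat -> bool) g, (1 <= c <= k)%nat ->
  (forall c' t, c' <> c -> P1 c' t = P c' t /\ P2 c' t = P c' t) ->
  (forall t, P c t = (P1 c t || P2 c t) /\ (P1 c t && P2 c t) = false) ->
  boxsumP k P M g = boxsumP k P1 M g + boxsumP k P2 M g.
Proof.
  induction k as [|k IH]; intros P P1 P2 g Hc HP Hi; [lia|]. simpl.
  rewrite <- sumR_plus. apply sumR_ext. intros t _.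
  destruct (Nat.eq_dec c (S k)) as [->|Hne].
  - rewrite (boxsumP_ext k M P1 P), (boxsumP_ext k M P2 P) by (intros; apply HP; lia).
    destruct (Hi t) as [-> H12].
    destruct (P1 (S k) t), (P2 (S k) t); simpl in *; lra || discriminate.
  - destruct (HP (S k) t ltac:(lia)) as [-> ->]. destruct (P (S k) t); [|lra]. apply IH; auto. lia.
Qed.

Lemma boxsumP_nonneg k M : forall P g, (forall v, 0 <= g v) -> 0 <= boxsumP k P M g.
Proof.
  induction k as [|k IH]; intros P g H; simpl; auto. apply sumR_nonneg. intros.
  destruct (P (S k) i); [apply IH; auto|lra].
Qed.

Lemma boxsumP_mono k M : forall P g, (forall v, 0 <= g v) -> boxsumP k P M g <= boxsumP k P (S M) g.
Proof.
  induction k as [|k IH]; intros P g H; simpl; [lra|].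
  assert (0 <= if P (S k) M then boxsumP k P (S M) (fun v => g (upd v (S k) (S M))) else 0)
    by (destruct (P (S k) M); [apply boxsumP_nonneg; auto|lra]).
  enough (sumR M (fun t => if P (S k) t then boxsumP k P M (fun v => g (upd v (S k) (S t)))
                           else 0)
       <= sumR M (fun t => if P (S k) t then boxsumP k P (S M) (fun v => g (upd v (S k) (S t)))
                           else 0)) by lra.
  apply sumR_le. intros. destruct (P (S k) i); [apply IH; auto|lra].
Qed.

Lemma boxsumP_empty k M c : forall P g, (1 <= c <= k)%nat ->
  (forall t, (t < M)%nat -> P c t = false) -> boxsumP k P M g = 0.
Proof.
  induction k as [|k IH]; intros P g Hc H; [lia|]. simpl.
  transitivity (sumR M (fun _ => 0)); [|apply sumR_zero]. apply sumR_ext. intros t Ht.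
  destruct (Nat.eq_dec c (S k)) as [->|Hne]; [rewrite H; auto|].
  destruct (P (S k) t); auto. apply IH; auto. lia.
Qed.

Lemma card_coords_plus1 d c f g : (1 <= c <= d)%nat -> f c = true -> g c = false ->
  (forall i, i <> c -> f i = g i) -> card_coords d f = S (card_coords d g).
Proof.
  induction d as [|d IH]; intros Hc Hf Hg H; [lia|]. rewrite !card_coords_S.
  destruct (Nat.eq_dec c (S d)) as [->|Hne].
  - rewrite Hf, Hg, (card_coords_ext d f g) by (intros; apply H; lia). lia.
  - rewrite IH, H by (auto || lia). lia.
Qed.

Lemma card_coords_interval d a b : (a <= b)%nat ->
  card_coords d (fun i => (a <? i) && (i <=? b)) = (Nat.min b d - Nat.min a d)%nat.
Proof.
  intros Hab. induction d as [|d IH]; [rewrite !Nat.min_0_r; reflexivity|].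
  rewrite card_coords_S, IH.
  destruct (Nat.ltb_spec a (S d)), (Nat.leb_spec (S d) b); simpl; lia.
Qed.

Lemma Fbar_indicator d beta (kk : nat -> bool) :
  Fbar d beta (fun i => if kk i then 1%nat else O) = xseq beta (card_coords d kk).
Proof.
  rewrite Fbar_Fcount. set (lo := fun i => if kk i then 1%nat else O).
  assert (Hc : card_coords d kk = count_gt 0 (coords d lo)).
  { rewrite <- card_coords_count_gt. apply card_coords_ext.
    intros k _. unfold lo. destruct (kk k); auto. }
  assert (Hm : (list_max (coords d lo) <= 1)%nat).
  { apply list_max_le_In. intros y Hy. apply in_map_iff in Hy as [i [<- _]].
    unfold lo. destruct (kk i); lia. }
  unfold Fcount. rewrite Hc. destruct (list_max (coords d lo)) as [|[|n]] eqn:E; [|simpl|lia].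
  - rewrite count_gt_above; [reflexivity|]. intros y Hy. pose proof (In_le_list_max _ _ Hy). lia.
  - pose proof (count_gt_pos 0 (coords d lo) ltac:(lia)). unfold xseq.
    destruct (count_gt 0 (coords d lo)); [lia|]. simpl. lra.
Qed.

(* As a [boxsumP] predicate: the indices [v] with [v c = 1] for [c] in [e], [v c >= 2] for
   [c] in [kk], and [v c] free otherwise. *)
Definition region (e kk : nat -> bool) : nat -> nat -> bool :=
  fun c t => if e c then t =? 0 else if kk c then 1 <=? t else true.

Lemma Un_cv_const c : Un_cv (fun _ => c) c.
Proof. intros eps Heps. exists O. intros n _. unfold R_dist. rewrite Rminus_diag, Rabs_R0. lra. Qed.

Lemma Fbar_axis d beta m : (1 <= d)%nat -> Fbar d beta (upd (fun _ => O) 1 m) = beta 1%nat ^ m.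
Proof.
  intros Hd. rewrite Fbar_Fcount. set (nm := upd (fun _ => O) 1 m).
  assert (Hmax : list_max (coords d nm) = m).
  { apply Nat.le_antisymm.
    - apply list_max_le_In. intros y Hy. apply in_map_iff in Hy as [i [<- _]].
      unfold nm, upd. destruct (i =? 1); lia.
    - pose proof (le_maxcoord d nm 1 ltac:(lia)) as H.
      unfold nm in H. rewrite upd_eq in H. exact H. }
  unfold Fcount. rewrite Hmax, <- prodR_const. apply prodR_ext. intros t Ht.
  rewrite <- card_coords_count_gt, (card_coords_ext d _ (fun k => k =? 1)).
  - rewrite card_coords_single by lia. reflexivity.
  - intros k Hk. unfold nm, upd.
    destruct (Nat.eqb_spec k 1); [apply Nat.leb_le|apply Nat.leb_gt]; lia.
Qed.

Section Converse.

Variables (d : nat) (beta : nat -> R) (p : (nat -> nat) -> R).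
Hypothesis Hp : forall v, 0 <= p v.
Hypothesis Htot : Un_cv (fun M => boxsum d (fun _ => O) M p) 1.
Hypothesis Hsurv : forall n, Un_cv (fun M => boxsum d n M p) (Fbar d beta n).

Lemma boxsumP_region_false_cv kk :
  Un_cv (fun M => boxsumP d (region (fun _ => false) kk) M p) (xseq beta (card_coords d kk)).
Proof.
  rewrite <- Fbar_indicator. eapply Un_cv_ext; [|apply Hsurv]. intros M. simpl.
  rewrite boxsum_boxsumP. apply boxsumP_ext. intros c t _. unfold region. destruct (kk c); auto.
Qed.

(* Inclusion-exclusion, one coordinate of [e] at a time. *)
Lemma boxsumP_region_cv c : (c <= d)%nat -> forall e kk,
  (forall i, e i = true -> (1 <= i <= c)%nat) -> (forall i, e i = true -> kk i = false) ->
  Un_cv (fun M => boxsumP d (region e kk) M p)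
        (nabla (card_coords d e) (xseq beta) (card_coords d kk)).
Proof.
  induction c as [|c IH]; intros Hcd e kk Hsupp Hdis.
  - replace e with (fun _ : nat => false).
    + rewrite card_coords_false, nabla_0. apply boxsumP_region_false_cv.
    + apply functional_extensionality. intros i.
      destruct (e i) eqn:E; auto. apply Hsupp in E. lia.
  - destruct (e (S c)) eqn:Ee.
    2:{ apply IH; [lia|intros i Hi|auto]. pose proof (Hsupp i Hi).
        destruct (Nat.eq_dec i (S c)) as [->|]; [congruence|lia]. }
    set (e' := fun i => e i && negb (i =? S c)).
    set (kk' := fun i => kk i || (i =? S c)).
    assert (Hsupp' : forall i, e' i = true -> (1 <= i <= c)%nat).
    { intros i Hi. unfold e' in Hi. apply andb_prop in Hi as [Hi Hne].
      apply negb_true_iff, Nat.eqb_neq in Hne. pose proof (Hsupp i Hi). lia. }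
    assert (Hdis' : forall i, e' i = true -> kk i = false /\ kk' i = false).
    { intros i Hi. pose proof (Hsupp' i Hi). unfold e' in Hi. apply andb_prop in Hi as [Hi _].
      unfold kk'. rewrite Hdis, (proj2 (Nat.eqb_neq i (S c))) by (auto || lia). auto. }
    assert (Ee' : card_coords d e = S (card_coords d e')).
    { apply (card_coords_plus1 d (S c)); unfold e';
        [lia|auto|now rewrite Nat.eqb_refl, andb_false_r|].
      intros i Hi. rewrite (proj2 (Nat.eqb_neq i (S c))), andb_true_r by auto. reflexivity. }
    assert (Ekk' : card_coords d kk' = S (card_coords d kk)).
    { apply (card_coords_plus1 d (S c)); unfold kk'; [lia|now rewrite Nat.eqb_refl, orb_true_r|
        apply Hdis; auto|].
      intros i Hi. rewrite (proj2 (Nat.eqb_neq i (S c))), orb_false_r by auto. reflexivity. }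
    pose proof (IH ltac:(lia) e' kk Hsupp' (fun i Hi => proj1 (Hdis' i Hi))) as IH1.
    pose proof (IH ltac:(lia) e' kk' Hsupp' (fun i Hi => proj2 (Hdis' i Hi))) as IH2.
    rewrite Ee', nabla_S, <- Ekk'.
    eapply Un_cv_ext; [|exact (CV_minus _ _ _ _ IH1 IH2)].
    intros M. cbv beta.
    rewrite (boxsumP_split_coord d M (S c) (region e' kk) (region e kk) (region e' kk'));
      [lra|lia| |].
    + intros c' t Hc'. unfold region, e', kk'.
      rewrite (proj2 (Nat.eqb_neq c' (S c))), andb_true_r, orb_false_r by auto. auto.
    + intros t. unfold region, e', kk'. rewrite Ee, Nat.eqb_refl, andb_false_r, orb_true_r.
      rewrite (Hdis (S c) Ee). destruct t; auto.
Qed.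

Lemma surv_nabla_nonneg k j : (k <= d)%nat -> (j <= d - k)%nat -> 0 <= nabla j (xseq beta) k.
Proof.
  intros Hk Hj.
  pose proof (boxsumP_region_cv d (le_n d) (fun i => (0 <? i) && (i <=? j))
                (fun i => (j <? i) && (i <=? j + k))) as Hcv.
  rewrite !card_coords_interval in Hcv by lia.
  replace (Nat.min j d - Nat.min 0 d)%nat with j in Hcv by lia.
  replace (Nat.min (j + k) d - Nat.min j d)%nat with k in Hcv by lia.
  eapply Rle_cv_lim; [|apply (Un_cv_const 0)|apply Hcv].
  - intros; apply boxsumP_nonneg; auto.
  - intros i Hi. apply andb_prop in Hi as [H1 H2].
    apply Nat.ltb_lt in H1. apply Nat.leb_le in H2. lia.
  - intros i Hi. apply andb_prop in Hi as [_ H2]. apply Nat.leb_le in H2.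
    rewrite (proj2 (Nat.ltb_ge j i)) by lia. reflexivity.
Qed.

(* The left side is at most the mass of [{v_1 <= m}], which is [1 - P(tau_1 > m)]. *)
Lemma boxsum_le_axis_tail m : (1 <= d)%nat ->
  boxsum d (fun _ => O) m p <= 1 - Fbar d beta (upd (fun _ => O) 1 m).
Proof.
  intros Hd. set (nm := upd (fun _ => O) 1 m).
  set (Pm := fun c t => if c =? 1 then t <? m else true).
  assert (Hsplit : forall M, boxsum d (fun _ => O) M p = boxsumP d Pm M p + boxsum d nm M p).
  { intros M. rewrite !boxsum_boxsumP. apply (boxsumP_split_coord d M 1); [lia| |].
    - intros c' t Hc'. unfold Pm, nm. rewrite upd_neq, (proj2 (Nat.eqb_neq c' 1)) by auto. auto.
    - intros t. unfold Pm, nm. rewrite upd_eq. simpl.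
      destruct (Nat.ltb_spec t m), (Nat.leb_spec m t); simpl; auto; lia. }
  assert (Hcv : Un_cv (fun M => boxsumP d Pm M p) (1 - Fbar d beta nm)).
  { eapply Un_cv_ext; [|apply (CV_minus _ _ _ _ Htot (Hsurv nm))].
    intros M. cbv beta. rewrite (Hsplit M). ring. }
  pose proof (growing_ineq _ _ (fun M => boxsumP_mono d M Pm p Hp) Hcv m).
  rewrite Hsplit, boxsum_boxsumP, (boxsumP_empty d m 1 (fun c t => nm c <=? t)); [lra|lia|].
  intros t Ht. unfold nm. rewrite upd_eq. apply Nat.leb_gt. lia.
Qed.

Lemma surv_beta1_lt_1 : (1 <= d)%nat -> beta 1%nat < 1.
Proof.
  intros Hd. destruct (Rlt_or_le (beta 1%nat) 1) as [|Hge]; auto. exfalso.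
  pose proof (surv_nabla_nonneg 0 1 ltac:(lia) ltac:(lia)) as H01.
  rewrite nabla_S, !nabla_0 in H01. unfold xseq in H01. simpl in H01.
  assert (Hnonpos : forall m, boxsum d (fun _ => O) m p <= 0).
  { intros m. pose proof (boxsum_le_axis_tail m Hd) as H.
    rewrite Fbar_axis, (Rle_antisym (beta 1%nat) 1), pow1 in H by (auto || lra). lra. }
  pose proof (Rle_cv_lim Hnonpos Htot (Un_cv_const 0)). lra.
Qed.

Lemma IsDiscreteSurvival_InM : (1 <= d)%nat -> InM d (xseq beta).
Proof.
  intros Hd. split; [reflexivity|split].
  - apply surv_beta1_lt_1; auto.
  - apply surv_nabla_nonneg.
Qed.

End Converse.

Theorem theorem3p2 (d : nat) (hd : (1 <= d)%nat) (beta : nat -> R) :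
  (IsDiscreteSurvival d (Fbar d beta) <->
     InM d (fun k => if Nat.eqb k 0 then 1 else beta k)) /\
  (InM d (fun k => if Nat.eqb k 0 then 1 else beta k) ->
     exists pt : nat -> R,
       WSGParams d pt /\
       Exchangeable d (WSG_surv d pt) /\
       forall n : nat -> nat, WSG_surv d pt n = Fbar d beta n).
Proof.
  change (fun k => if Nat.eqb k 0 then 1 else beta k) with (xseq beta).
  split; [split|].
  - intros [p [Hp [Htot Hsurv]]]. exact (IsDiscreteSurvival_InM d beta p Hp Htot Hsurv hd).
  - apply InM_IsDiscreteSurvival; auto.
  - intros HM. exists (wsg_param d beta). split; [apply wsg_param_WSGParams; auto|split].
    + intros sigma Hsig n. rewrite !WSG_surv_Fbar. apply Fbar_exchangeable; auto.
    + apply WSG_surv_Fbar.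
Qed.
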